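(* Let $C_i=(Q_i,s_i,D_i,E_i)$, $i\in\{1,2\}$, be finite charts. If $s_1\sim s_2$ (i.e. $C_1\sim C_2$), then $\mathsf{bd}([C_1],[C_2])=0$. Otherwise $\mathsf{bd}([C_1],[C_2])=2^{-n}$, where $n\in\mathbb{N}$ is the largest natural number such that $s_1\sim^{(n)}s_2$.
   Context: Fix a set $V=\{v_1,v_2,\dots\}$ of variables and a set $\Sigma$ of letters. A prechart is a triple $(Q,D,E)$ with $D\subseteq Q\times\Sigma\times Q$ and $E\subseteq Q\times V$ finite relations; write $q\xrightarrow{a}q'$ for $(q,a,q')\in D$, $q\rhd v$ for $(q,v)\in E$, $E(q)=\{v\mid (q,v)\in E\}$. Equivalently a prechart is a pair $(Q,\beta)$ with $\beta:Q\to P_{\mathrm{fin}}(\Sigma\times Q+V)$, $\beta(q)=\{(a,q')\mid q\xrightarrow{a}q'\}\cup E(q)$. A chart $(Q,s,D,E)$ is a prechart with a start state $s\in Q$; it is finite if $Q$ is finite. A bisimulation between precharts $(Q_1,D_1,E_1)$, $(Q_2,D_2,E_2)$ is $R\subseteq Q_1\times Q_2$ such that whenever $(q_1,q_2)\in R$: $E_1(q_1)=E_2(q_2)$; if $q_1\xrightarrow{a}q_1'$ there is $q_2'$ with $q_2\xrightarrow{a}q_2'$ and $(q_1',q_2')\in R$; and symmetrically. States are bisimilar ($\sim$) if related by some bisimulation; charts are bisimilar if their start states are. Stratified bisimilarity: $q_1\sim^{(0)}q_2$ always; $q_1\sim^{(n+1)}q_2$ iff $E_1(q_1)=E_2(q_2)$,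 every $q_1\xrightarrow{a}q_1'$ is matched by some $q_2\xrightarrow{a}q_2'$ with $q_1'\sim^{(n)}q_2'$, and symmetrically. $\Omega$ is the set of finite charts modulo bisimilarity, made into a prechart by $[(Q,s,D,E)]\xrightarrow{a}[(Q,s',D,E)]$ iff $s\xrightarrow{a}s'$ and $[(Q,s,D,E)]\rhd v$ iff $s\rhd v$. Behavioural distance: a 1-bounded pseudometric on $X$ is $d:X\times X\to[0,1]$ with $d(x,x)=0$, symmetry and triangle inequality; $D_X$ denotes the set of these, ordered pointwise (a complete lattice). For $d\in D_X$ define $d^\uparrow$ on $\Sigma\times X+V$ by $d^\uparrow((a,x),(a,y))=\tfrac12 d(x,y)$, $d^\uparrow(m,n)=0$ if $m=n$, and $d^\uparrow(m,n)=1$ otherwise. The Hausdorff lifting is $\mathcal H(d)(A,B)=\max\{\sup_{x\in A}\inf_{y\in B}d(x,y),\ \sup_{y\in B}\inf_{x\in A}d(y,x)\}$ for finite $A,B\subseteq X$, with $\sup\emptyset=0$ and $\inf\emptyset=1$. For a prechart $(Q,\beta)$, $\Phi_\beta:D_Q\to D_Q$ is $\Phi_\beta(d)(q_1,q_2)=\mathcal H(d^\uparrow)(\beta(q_1),\beta(q_2))$; it is monotone and $\mathsf{bd}_\beta$ denotes its least fixpoint. $\mathsf{bd}$ denotes $\mathsf{bd}_\beta$ for the prechart $\Omega$. *)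

From HB Require Import structures.
From mathcomp Require Import all_boot all_order all_algebra.
From Stdlib Require List.
From mathcomp Require Import boolp classical_sets reals.
Set Implicit Arguments. Unset Strict Implicit. Unset Printing Implicit Defensive.
Import Order.TTheory GRing.Theory Num.Theory.
Local Open Scope classical_set_scope.
Local Open Scope ring_scope.

(* Variables V = {v_1, v_2, ...} are represented by nat; letters by Sig. *)

Record fchart (Sig : Type) := FChart {
  fQ : finType;
  fs : fQ;
  fD : seq (fQ * Sig * fQ);
  fE : seq (fQ * nat) }.

Definition ftrans Sig (C : fchart Sig) (q : fQ C) (a : Sig) (q' : fQ C) : Prop :=
  List.In (q, a, q') (fD C).
Definition fterm Sig (C : fchart Sig) (q : fQ C) (v : nat) : Prop :=
  List.In (q, v) (fE C).

Definition with_start Sig (C : fchart Sig) (s' : fQ C) : fchart Sig :=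
  @FChart Sig (fQ C) s' (fD C) (fE C).

Definition is_bisim Sig (Q1 Q2 : Type)
  (D1 : Q1 -> Sig -> Q1 -> Prop) (E1 : Q1 -> nat -> Prop)
  (D2 : Q2 -> Sig -> Q2 -> Prop) (E2 : Q2 -> nat -> Prop)
  (R : Q1 -> Q2 -> Prop) : Prop :=
  forall q1 q2, R q1 q2 ->
    (forall v, E1 q1 v <-> E2 q2 v) /\
    (forall a q1', D1 q1 a q1' -> exists q2', D2 q2 a q2' /\ R q1' q2') /\
    (forall a q2', D2 q2 a q2' -> exists q1', D1 q1 a q1' /\ R q1' q2').

Definition chart_bisim Sig (C1 C2 : fchart Sig) : Prop :=
  exists R, @is_bisim Sig (fQ C1) (fQ C2) (@ftrans Sig C1) (@fterm Sig C1)
                  (@ftrans Sig C2) (@fterm Sig C2) R /\ R (fs C1) (fs C2).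

Fixpoint sbisim Sig (Q1 Q2 : Type)
  (D1 : Q1 -> Sig -> Q1 -> Prop) (E1 : Q1 -> nat -> Prop)
  (D2 : Q2 -> Sig -> Q2 -> Prop) (E2 : Q2 -> nat -> Prop)
  (n : nat) (q1 : Q1) (q2 : Q2) : Prop :=
  match n with
  | 0 => True
  | n'.+1 =>
    (forall v, E1 q1 v <-> E2 q2 v) /\
    (forall a q1', D1 q1 a q1' ->
        exists q2', D2 q2 a q2' /\ sbisim D1 E1 D2 E2 n' q1' q2') /\
    (forall a q2', D2 q2 a q2' ->
        exists q1', D1 q1 a q1' /\ sbisim D1 E1 D2 E2 n' q1' q2')
  end.

Definition chart_sbisim Sig (n : nat) (C1 C2 : fchart Sig) : Prop :=
  @sbisim Sig (fQ C1) (fQ C2) (@ftrans Sig C1) (@fterm Sig C1)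
          (@ftrans Sig C2) (@fterm Sig C2) n (fs C1) (fs C2).

Definition cls Sig (C : fchart Sig) : fchart Sig -> Prop :=
  fun C' => chart_bisim C' C.

Definition Omega (Sig : Type) : Type :=
  {S : fchart Sig -> Prop | exists C : fchart Sig, S = cls C}.

Definition class_of Sig (C : fchart Sig) : Omega Sig :=
  exist _ (cls C) (ex_intro _ C erefl).

Definition Otrans Sig (x : Omega Sig) (a : Sig) (y : Omega Sig) : Prop :=
  exists C : fchart Sig, proj1_sig x C /\
    exists s' : fQ C, ftrans (fs C) a s' /\ proj1_sig y (with_start s').

Definition Oterm Sig (x : Omega Sig) (v : nat) : Prop :=
  exists C : fchart Sig, proj1_sig x C /\ fterm (fs C) v.

Section Dist.
Variable R : realType.

Definition pseudometric (X : Type) (d : X -> X -> R) : Prop :=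
  (forall x y, 0 <= d x y <= 1) /\
  (forall x, d x x = 0) /\
  (forall x y, d x y = d y x) /\
  (forall x y z, d x z <= d x y + d y z).

(* sup with sup(empty) = 0, inf with inf(empty) = 1 *)
Definition supz (A : set R) : R := if pselect (A = set0) then 0 else sup A.
Definition inf1 (A : set R) : R := if pselect (A = set0) then 1 else inf A.

Definition hausdorff (T : Type) (d : T -> T -> R) (A B : T -> Prop) : R :=
  Num.max
    (supz [set r | exists x, A x /\
             r = inf1 [set r' | exists y, B y /\ r' = d x y]])
    (supz [set r | exists y, B y /\
             r = inf1 [set r' | exists x, A x /\ r' = d y x]]).

Definition dup (Sig X : Type) (d : X -> X -> R)
  (m n : (Sig * X) + nat) : R :=
  match m, n with
  | inl (a, x), inl (b, y) => if pselect (a = b) then d x y / 2 else 1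
  | inr v, inr w => if v == w then 0 else 1
  | _, _ => 1
  end.

Definition beta (Sig Q : Type) (D : Q -> Sig -> Q -> Prop) (E : Q -> nat -> Prop)
  (q : Q) : (Sig * Q) + nat -> Prop :=
  fun m => match m with inl (a, q') => D q a q' | inr v => E q v end.

Definition Phi (Sig Q : Type) (D : Q -> Sig -> Q -> Prop) (E : Q -> nat -> Prop)
  (d : Q -> Q -> R) : Q -> Q -> R :=
  fun q1 q2 => hausdorff (@dup Sig Q d) (beta D E q1) (beta D E q2).

Definition is_lfp_Phi (Sig Q : Type) (D : Q -> Sig -> Q -> Prop)
  (E : Q -> nat -> Prop) (d : Q -> Q -> R) : Prop :=
  pseudometric d /\ (forall x y, Phi D E d x y = d x y) /\
  (forall d', pseudometric d' -> (forall x y, Phi D E d' x y = d' x y) ->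
     forall x y, d x y <= d' x y).

(* bd_beta: the least fixpoint (chosen by description; it is unique) *)
Definition bd_of (Sig Q : Type) (D : Q -> Sig -> Q -> Prop) (E : Q -> nat -> Prop)
  : Q -> Q -> R :=
  match pselect (exists d, is_lfp_Phi D E d) with
  | left H => proj1_sig (cid H)
  | right _ => fun _ _ => 0
  end.

Definition bd (Sig : Type) : Omega Sig -> Omega Sig -> R :=
  @bd_of Sig (Omega Sig) (@Otrans Sig) (@Oterm Sig).

End Dist.

From Pilot Require Import Defs.
From HB Require Import structures.
From mathcomp Require Import all_boot all_order all_algebra.
From mathcomp Require Import boolp classical_sets reals.
From mathcomp Require Import lra.
Set Implicit Arguments. Unset Strict Implicit.
Local Open Scope classical_set_scope.
Import Order.TTheory GRing.Theory Num.Theory.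
Local Open Scope ring_scope.

(* On any prechart, let [sdist x y] be 2^-n for the largest level n at which
   x and y are stratified bisimilar, and 0 if they are so at every level.  It is
   a 1-bounded pseudometric and a fixpoint of Phi: if level n+1 fails, then the
   labels differ (distance 1) or some step of one side is matched at level n by
   no step of the other, and Phi halves the resulting distance 2^-(n-1).  The
   same observation shows, by induction on n, that every fixpoint of Phi is at
   least 2^-n where level n+1 fails, so [sdist] is the least fixpoint, i.e. bd.
   On Omega, q |-> [(Q, q, D, E)] is a bounded morphism from a chart, hence
   preserves stratified bisimilarity; and finite charts are image-finite, so
   for them bisimilarity is stratified bisimilarity at every level. *)

Section HalfPowers.
Variable R : realType.

Lemma exp2V_gt0 n : 0 < (2:R) ^- n.
Proof. by rewrite invr_gt0 exprn_gt0. Qed.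

Lemma exp2V_ge0 n : 0 <= (2:R) ^- n.
Proof. exact/ltW/exp2V_gt0. Qed.

Lemma exp2V_le1 n : (2:R) ^- n <= 1.
Proof. by rewrite invf_le1 ?exprn_gt0 // exprn_ege1 // ler1n. Qed.

Lemma exp2VS n : (2:R) ^- n.+1 = (2:R) ^- n / 2.
Proof. by rewrite exprSr invfM. Qed.

Lemma exp2V_leW m n : (m <= n)%N -> (2:R) ^- n <= (2:R) ^- m.
Proof.
by move=> mn; rewrite lef_pV2 ?posrE ?exprn_gt0 // ler_eXn2l // ltr1n.
Qed.

Lemma le_exp2V_eq0 (r : R) : 0 <= r -> (forall n, r <= (2:R) ^- n) -> r = 0.
Proof.
move=> r0 r_small; apply/eqP; rewrite eq_le r0 andbT leNgt; apply/negP => r_gt0.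
have [k] := ltr_add_invr r_gt0; rewrite add0r; apply/negP; rewrite -leNgt.
apply: le_trans (r_small k.+1) _.
rewrite lef_pV2 ?posrE ?exprn_gt0 ?ltr0n // -natrX ler_nat.
exact/ltnW/ltn_expl.
Qed.

End HalfPowers.

Section SupInf.
Variable R : realType.
Implicit Types A B : set R.

Lemma supz_le A c : 0 <= c -> (forall r, A r -> r <= c) -> supz A <= c.
Proof.
move=> c0 A_le; rewrite /supz; case: pselect => // An0.
by apply: ge_sup => //; exact/set0P/eqP.
Qed.

Lemma supz_ge A r : A r -> (forall r, A r -> r <= 1) -> r <= supz A.
Proof.
move=> Ar A_le1; rewrite /supz; case: pselect => [A0|An0]; first by rewrite A0 in Ar.
by apply: ub_le_sup => //; exists 1.
Qed.

Lemma supz_01 A : (forall r, A r -> 0 <= r <= 1) -> 0 <= supz A <= 1.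
Proof.
move=> A01; rewrite supz_le //; last by move=> r /A01 /andP[].
rewrite andbT; case: (pselect (A = set0)) => [A0|/eqP/set0P [r Ar]].
  by rewrite /supz; case: pselect.
have /andP[r0 _] := A01 r Ar; apply: le_trans r0 (supz_ge Ar _).
by move=> s /A01 /andP[].
Qed.

Lemma inf1_le B r : B r -> (forall r, B r -> 0 <= r) -> Defs.inf1 B <= r.
Proof.
move=> Br B_ge0; rewrite /Defs.inf1; case: pselect => [B0|Bn0]; first by rewrite B0 in Br.
by apply: ge_inf => //; exists 0.
Qed.

Lemma inf1_ge B c : c <= 1 -> (forall r, B r -> c <= r) -> c <= Defs.inf1 B.
Proof.
move=> c1 B_ge; rewrite /Defs.inf1; case: pselect => // Bn0.
by apply: lb_le_inf => //; exact/set0P/eqP.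
Qed.

Lemma inf1_01 B : (forall r, B r -> 0 <= r <= 1) -> 0 <= Defs.inf1 B <= 1.
Proof.
move=> B01; rewrite inf1_ge //=; last by move=> r /B01 /andP[].
case: (pselect (B = set0)) => [B0|/eqP/set0P [r Br]].
  by rewrite /Defs.inf1; case: pselect.
have /andP[_ r1] := B01 r Br; apply: le_trans (inf1_le Br _) r1.
by move=> s /B01 /andP[].
Qed.

End SupInf.

Section Stratified.
Variable Sig : Type.
Variables (Q1 Q2 Q3 : Type).
Variables (D1 : Q1 -> Sig -> Q1 -> Prop) (E1 : Q1 -> nat -> Prop).
Variables (D2 : Q2 -> Sig -> Q2 -> Prop) (E2 : Q2 -> nat -> Prop).
Variables (D3 : Q3 -> Sig -> Q3 -> Prop) (E3 : Q3 -> nat -> Prop).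

Lemma sbisimS n q1 q2 : sbisim D1 E1 D2 E2 n.+1 q1 q2 -> sbisim D1 E1 D2 E2 n q1 q2.
Proof.
elim: n q1 q2 => [//|n IH] q1 q2 /= [HE [forth back]]; split=> //; split.
- by move=> a q1' /forth [q2' [t2 S12]]; exists q2'; split; last exact: IH.
- by move=> a q2' /back [q1' [t1 S12]]; exists q1'; split; last exact: IH.
Qed.

Lemma sbisim_le m n q1 q2 :
  (m <= n)%N -> sbisim D1 E1 D2 E2 n q1 q2 -> sbisim D1 E1 D2 E2 m q1 q2.
Proof.
move=> /subnK <-; elim: (n - m)%N => [//|k IH] Skm.
by apply/IH/sbisimS; rewrite -addSn.
Qed.

Lemma sbisim_sym n q1 q2 : sbisim D1 E1 D2 E2 n q1 q2 -> sbisim D2 E2 D1 E1 n q2 q1.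
Proof.
elim: n q1 q2 => [//|n IH] q1 q2 /= [HE [forth back]].
split; first by move=> v; split => /HE.
split.
- by move=> a q2' /back [q1' [t1 S12]]; exists q1'; split; last exact: IH.
- by move=> a q1' /forth [q2' [t2 S12]]; exists q2'; split; last exact: IH.
Qed.

Lemma sbisim_trans n q1 q2 q3 : sbisim D1 E1 D2 E2 n q1 q2 ->
  sbisim D2 E2 D3 E3 n q2 q3 -> sbisim D1 E1 D3 E3 n q1 q3.
Proof.
elim: n q1 q2 q3 => [//|n IH] q1 q2 q3 /= [HE12 [f12 b12]] [HE23 [f23 b23]].
split; first by move=> v; rewrite HE12 HE23.
split.
- move=> a q1' /f12 [q2' [t2 S12]]; have [q3' [t3 S23]] := f23 _ _ t2.
  by exists q3'; split; last exact: IH S23.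
- move=> a q3' /b23 [q2' [t2 S23]]; have [q1' [t1 S12]] := b12 _ _ t2.
  by exists q1'; split; last exact: IH S23.
Qed.

Lemma bisim_sbisim (B : Q1 -> Q2 -> Prop) n q1 q2 :
  is_bisim D1 E1 D2 E2 B -> B q1 q2 -> sbisim D1 E1 D2 E2 n q1 q2.
Proof.
move=> bisimB; elim: n q1 q2 => [//|n IH] q1 q2 /bisimB [HE [forth back]] /=.
split=> //; split.
- by move=> a q1' /forth [q2' [t2 B12]]; exists q2'; split; last exact: IH.
- by move=> a q2' /back [q1' [t1 B12]]; exists q1'; split; last exact: IH.
Qed.

End Stratified.

Lemma sbisim_refl Sig Q (D : Q -> Sig -> Q -> Prop) E n q : sbisim D E D E n q q.
Proof.
elim: n q => [//|n IH] q /=; split=> //.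
by split=> a q' t; exists q'.
Qed.

Lemma list_antitone_witness (Y : Type) (P : nat -> Y -> Prop) (l : list Y) :
  (forall n y, P n.+1 y -> P n y) ->
  (forall n, exists y, List.In y l /\ P n y) ->
  exists y, List.In y l /\ forall n, P n y.
Proof.
move=> PS; have P_le m n y : (m <= n)%N -> P n y -> P m y.
  by move=> /subnK <-; elim: (n - m)%N => [//|k IH] Pk; apply/IH/PS; rewrite -addSn.
elim: l => [|y l IH] witness; first by have [y [[] _]] := witness 0%N.
case: (pselect (forall n, P n y)) => [Py|/existsNP [n0 not_Py]].
  by exists y; split; [left|].
have [y' [l_y' Py']] : exists y', List.In y' l /\ forall n, P n y'.
  apply: IH => n; have [y' [[<-|l_y'] Py']] := witness (n + n0)%N.
    by case: not_Py; apply: P_le Py'; rewrite leq_addl.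
  by exists y'; split=> //; apply: P_le Py'; rewrite leq_addr.
by exists y'; split; [right|].
Qed.

Definition image_finite (Sig Q : Type) (D : Q -> Sig -> Q -> Prop) : Prop :=
  forall q a, exists l, forall q', D q a q' -> List.In q' l.

Section HennessyMilner.
Variables (Sig Q1 Q2 : Type).
Variables (D1 : Q1 -> Sig -> Q1 -> Prop) (E1 : Q1 -> nat -> Prop).
Variables (D2 : Q2 -> Sig -> Q2 -> Prop) (E2 : Q2 -> nat -> Prop).
Local Notation S := (sbisim D1 E1 D2 E2).

Lemma sbisim_all_forth q1 q2 a q1' : image_finite D2 ->
  (forall n, S n q1 q2) -> D1 q1 a q1' ->
  exists q2', D2 q2 a q2' /\ forall n, S n q1' q2'.
Proof.
move=> finD2 S12 t1; have [l l_succ] := finD2 q2 a.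
have [q2' [_ P12]] : exists q2', List.In q2' l /\ forall n, D2 q2 a q2' /\ S n q1' q2'.
  apply: list_antitone_witness => [n q2' [t2 Sn]|n]; first by split=> //; exact: sbisimS.
  have [_ [forth _]] := S12 n.+1; have [q2' [t2 Sn]] := forth _ _ t1.
  by exists q2'; split; [exact: l_succ | split].
by exists q2'; split=> [|n]; [exact: (P12 0%N).1 | exact: (P12 n).2].
Qed.

End HennessyMilner.

Lemma sbisim_all_is_bisim (Sig Q1 Q2 : Type)
  (D1 : Q1 -> Sig -> Q1 -> Prop) (E1 : Q1 -> nat -> Prop)
  (D2 : Q2 -> Sig -> Q2 -> Prop) (E2 : Q2 -> nat -> Prop) :
  image_finite D1 -> image_finite D2 ->
  is_bisim D1 E1 D2 E2 (fun q1 q2 => forall n, sbisim D1 E1 D2 E2 n q1 q2).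
Proof.
move=> finD1 finD2 q1 q2 S12; split; first by have [] := S12 1%N.
split=> a q' t; first exact: sbisim_all_forth t.
have S21 n : sbisim D2 E2 D1 E1 n q2 q1 by exact: sbisim_sym.
have [q1' [t1 S21']] := sbisim_all_forth finD1 S21 t.
by exists q1'; split=> // n; exact: sbisim_sym.
Qed.

Section StratifiedDistance.
Variable R : realType.
Variables (Sig Q : Type) (D : Q -> Sig -> Q -> Prop) (E : Q -> nat -> Prop).
Local Notation S := (sbisim D E D E).

Lemma lfp_Phi_unique (d d' : Q -> Q -> R) :
  is_lfp_Phi D E d -> is_lfp_Phi D E d' -> d = d'.
Proof.
move=> [d_pm [d_fix d_least]] [d'_pm [d'_fix d'_least]].
apply/funext => x; apply/funext => y.
by apply/le_anti; rewrite (d_least _ d'_pm d'_fix) (d'_least _ d_pm d_fix).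
Qed.

(* [ex_minn H] is the least level at which [x] and [y] are not stratified
   bisimilar; its predecessor is the largest level at which they are. *)
Definition sdist (x y : Q) : R :=
  match pselect (exists n, ~~ `[< S n x y >]) with
  | left H => (2:R) ^- (ex_minn H).-1
  | right _ => 0
  end.

Lemma sdist_spec x y : (sdist x y = 0 /\ forall n, S n x y) \/
  exists k, sdist x y = (2:R) ^- k /\ S k x y /\ ~ S k.+1 x y.
Proof.
rewrite /sdist; case: pselect => [H|H]; last first.
  left; split=> // n; apply: contrapT => not_Sn; apply: H; exists n.
  by apply/negP => /asboolP.
right; case: ex_minnP => m /negP not_Sm m_min.
have {}not_Sm : ~ S m x y by move=> Sm; apply/not_Sm/asboolP.
case: m not_Sm m_min => [|k] not_Sk1 k_min; first by case: not_Sk1.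
exists k; split=> //; split=> //; apply: contrapT => not_Sk.
suff: (k.+1 <= k)%N by rewrite ltnn.
by apply: k_min; apply/negP => /asboolP.
Qed.

Lemma sdist_le n x y : S n x y -> sdist x y <= (2:R) ^- n.
Proof.
move=> Sn; case: (sdist_spec x y) => [[-> _]|[k [-> [_ not_Sk1]]]].
  exact: exp2V_ge0.
by apply: exp2V_leW; rewrite leqNgt; apply/negP => kn; apply/not_Sk1/(sbisim_le kn).
Qed.

Lemma sdist_ge k x y : ~ S k.+1 x y -> (2:R) ^- k <= sdist x y.
Proof.
move=> not_Sk1; case: (sdist_spec x y) => [[_ S_all]|[j [-> [Sj _]]]].
  by case: not_Sk1.
by apply: exp2V_leW; rewrite leqNgt; apply/negP => kj; apply/not_Sk1/(sbisim_le kj).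
Qed.

Lemma sdist_01 x y : 0 <= sdist x y <= 1.
Proof.
case: (sdist_spec x y) => [[-> _]|[k [-> _]]]; first by rewrite lexx ler01.
by rewrite exp2V_ge0 exp2V_le1.
Qed.

Lemma sdist_eq0 x y : (forall n, S n x y) -> sdist x y = 0.
Proof. by move=> S_all; case: (sdist_spec x y) => [[]|[k [_ [_ []]]]]. Qed.

Lemma sdist_max_level x y : ~ (forall n, S n x y) ->
  exists n, S n x y /\ (forall m, S m x y -> (m <= n)%N) /\ sdist x y = (2:R) ^- n.
Proof.
case: (sdist_spec x y) => [[_ S_all] []//|[k [-> [Sk not_Sk1]]] _].
exists k; split=> //; split=> // m Sm; rewrite leqNgt; apply/negP => km.
exact/not_Sk1/(sbisim_le km).
Qed.

Lemma sdist_pseudometric : pseudometric sdist.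
Proof.
split; first exact: sdist_01.
split; first by move=> x; apply: sdist_eq0 => n; exact: sbisim_refl.
split.
  have le_sym x y : sdist x y <= sdist y x.
    case: (sdist_spec x y) => [[-> _]|[k [-> [_ not_Sk1]]]].
      by case/andP: (sdist_01 y x).
    by apply: sdist_ge => Syx; apply/not_Sk1/sbisim_sym.
  by move=> x y; apply/le_anti; rewrite !le_sym.
move=> x y z; have /andP[xy0 _] := sdist_01 x y; have /andP[yz0 _] := sdist_01 y z.
case: (sdist_spec x z) => [[-> _]|[k [-> [_ not_Sk1]]]]; first lra.
case: (pselect (S k.+1 x y)) => [Sxy|/sdist_ge]; last lra.
have /sdist_ge : ~ S k.+1 y z by move=> Syz; apply/not_Sk1/(sbisim_trans Sxy).
lra.
Qed.

Definition hdist (d : Q -> Q -> R) x y := supz [set r | exists m, beta D E x m /\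
  r = Defs.inf1 [set r' | exists m', beta D E y m' /\ r' = dup d m m']].

Lemma Phi_hdist d x y : Phi D E d x y = Num.max (hdist d x y) (hdist d y x).
Proof. by []. Qed.

Section BoundedDistance.
Variable d : Q -> Q -> R.
Hypothesis d01 : forall x y, 0 <= d x y <= 1.

Lemma dup_01 m m' : 0 <= @dup R Sig Q d m m' <= 1.
Proof.
case: m m' => [[a x]|v] [[b y]|w] /=; try by rewrite ler01 lexx.
  case: pselect => ab /=; last by rewrite ler01 lexx.
  by have /andP[d0 d1] := d01 x y; apply/andP; split; lra.
by case: eqP; rewrite ?ler01 ?lexx.
Qed.

Lemma inf1_dup_01 m (B : (Sig * Q) + nat -> Prop) :
  0 <= Defs.inf1 [set r | exists m', B m' /\ r = dup d m m'] <= 1.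
Proof. by apply: inf1_01 => r [m' [_ ->]]; exact: dup_01. Qed.

Lemma inf1_dup_le m (B : (Sig * Q) + nat -> Prop) m' : B m' ->
  Defs.inf1 [set r | exists m'', B m'' /\ r = dup d m m''] <= dup d m m'.
Proof.
move=> Bm'; apply: inf1_le; first by exists m'.
by move=> r [m'' [_ ->]]; case/andP: (dup_01 m m'').
Qed.

Lemma hdist_01 x y : 0 <= hdist d x y <= 1.
Proof. by apply: supz_01 => r [m [_ ->]]; exact: inf1_dup_01. Qed.

Lemma hdist_ge_term x y v : E x v -> ~ E y v -> 1 <= hdist d x y.
Proof.
move=> Exv not_Eyv.
apply: le_trans (supz_ge (A := [set r | exists m, _]) _ _); last first.
- by move=> r [m [_ ->]]; case/andP: (inf1_dup_01 m (beta D E y)).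
- by exists (inr v).
apply: inf1_ge => // r [[[b y']|w] [Eyw ->]] //=.
by case: eqP => // wv; subst w.
Qed.

Lemma hdist_ge_trans x y a x' (c : R) : c <= 1 -> D x a x' ->
  (forall y', D y a y' -> c <= d x' y' / 2) -> c <= hdist d x y.
Proof.
move=> c1 tx unmatched.
apply: le_trans (supz_ge (A := [set r | exists m, _]) _ _); last first.
- by move=> r [m [_ ->]]; case/andP: (inf1_dup_01 m (beta D E y)).
- by exists (inl (a, x')).
apply: inf1_ge => // r [[[b y']|w] [ty ->]] //=.
by case: pselect => // ba; subst b; exact: unmatched.
Qed.

Lemma Phi_ge_not_sbisim n x y (c : R) : c <= 1 ->
  (forall x' y', ~ S n x' y' -> c <= d x' y' / 2) -> ~ S n.+1 x y ->
  c <= Phi D E d x y.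
Proof.
move=> c1 c_le not_Sn1; rewrite Phi_hdist le_max.
case: (pselect (forall v, E x v <-> E y v)) => [HE|/existsNP [v not_HE]]; last first.
  apply/orP; case: (pselect (E x v)) => Exv.
    left; apply: le_trans c1 (hdist_ge_term Exv _) => Eyv; exact/not_HE.
  case: (pselect (E y v)) => Eyv; last by case: not_HE.
  by right; apply: le_trans c1 (hdist_ge_term Eyv _).
case: (pselect (forall a x', D x a x' -> exists y', D y a y' /\ S n x' y'))
  => [forth|/existsNP [a /existsNP [x' /not_implyP [tx unmatched]]]]; last first.
  apply/orP; left; apply: hdist_ge_trans tx _ => // y' ty; apply: c_le => Sn.
  by apply: unmatched; exists y'.
have /existsNP [a /existsNP [y' /not_implyP [ty unmatched]]] :
    ~ (forall a y', D y a y' -> exists x', D x a x' /\ S n x' y').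
  by move=> back; apply: not_Sn1.
apply/orP; right; apply: hdist_ge_trans ty _ => // x' tx; apply: c_le => Sn.
by apply: unmatched; exists x'; split=> //; exact: sbisim_sym.
Qed.

Lemma Phi_ge_exp2V k x y :
  (forall x' y', ~ S k x' y' -> (2:R) ^- k.-1 <= d x' y') -> ~ S k.+1 x y ->
  (2:R) ^- k <= Phi D E d x y.
Proof.
case: k => [|k] d_ge not_Sk1.
  by rewrite expr0 invr1; apply: Phi_ge_not_sbisim not_Sk1 => // x' y' /(_ I).
apply: Phi_ge_not_sbisim (exp2V_le1 _ _) _ not_Sk1 => x' y' /d_ge.
by rewrite exp2VS; lra.
Qed.

End BoundedDistance.

Lemma hdist_sdist_le n x y : S n x y -> hdist sdist x y <= (2:R) ^- n.
Proof.
case: n => [_|n [HE [forth _]]].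
  by rewrite expr0 invr1; case/andP: (hdist_01 sdist_01 x y).
apply: supz_le; first exact: exp2V_ge0.
move=> r [[[a x']|v] [tx ->]].
  have [y' [ty Sn]] := forth _ _ tx.
  apply: le_trans (inf1_dup_le sdist_01 (inl (a, x')) (m' := inl (a, y')) ty) _.
  rewrite /=; case: pselect => //= _.
  by have := sdist_le Sn; rewrite exp2VS; lra.
apply: le_trans (inf1_dup_le sdist_01 (inr v) (m' := inr v) _) _; first exact/HE.
by rewrite /= eqxx; exact: exp2V_ge0.
Qed.

Lemma sdist_fixpoint x y : Phi D E sdist x y = sdist x y.
Proof.
case: (sdist_spec x y) => [[-> S_all]|[k [-> [Sk not_Sk1]]]].
  have hdist0 a b : (forall n, S n a b) -> hdist sdist a b = 0.
    move=> Sab; apply: le_exp2V_eq0 => [|n]; last exact: hdist_sdist_le.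
    by case/andP: (hdist_01 sdist_01 a b).
  by rewrite Phi_hdist !hdist0 ?maxxx // => n; exact: sbisim_sym.
apply/le_anti/andP; split.
  by rewrite Phi_hdist ge_max !hdist_sdist_le //; exact: sbisim_sym.
apply: (Phi_ge_exp2V sdist_01 _ not_Sk1).
by case: k {Sk not_Sk1} => [|k] x' y'; [move=> /(_ I) | exact: sdist_ge].
Qed.

Lemma sdist_least (d : Q -> Q -> R) : pseudometric d ->
  (forall x y, Phi D E d x y = d x y) -> forall x y, sdist x y <= d x y.
Proof.
move=> [d01 _] d_fix.
have exp2V_le_d k x y : ~ S k.+1 x y -> (2:R) ^- k <= d x y.
  elim: k x y => [|k IH] x y not_Sk1; rewrite -d_fix.
    by apply: (Phi_ge_exp2V d01 _ not_Sk1) => x' y' /(_ I).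
  exact: (Phi_ge_exp2V d01 IH not_Sk1).
move=> x y; case: (sdist_spec x y) => [[-> _]|[k [-> [_ /exp2V_le_d //]]]].
by case/andP: (d01 x y).
Qed.

Lemma bd_of_sdist : bd_of R D E = sdist.
Proof.
have sdist_lfp : is_lfp_Phi D E sdist.
  split; first exact: sdist_pseudometric.
  by split; [exact: sdist_fixpoint | exact: sdist_least].
rewrite /bd_of; case: pselect => [lfp_ex|[]]; last by exists sdist.
exact: lfp_Phi_unique (svalP (cid lfp_ex)) sdist_lfp.
Qed.

End StratifiedDistance.

Definition bounded_morphism (Sig Q X : Type)
  (D : Q -> Sig -> Q -> Prop) (E : Q -> nat -> Prop)
  (DX : X -> Sig -> X -> Prop) (EX : X -> nat -> Prop) (f : Q -> X) : Prop :=
  (forall q v, EX (f q) v <-> E q v) /\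
  (forall q a y, DX (f q) a y <-> exists q', D q a q' /\ y = f q').

Section BoundedMorphism.
Variables (Sig X : Type) (DX : X -> Sig -> X -> Prop) (EX : X -> nat -> Prop).

Lemma forth_bounded_morphism (Qa Qb : Type)
  (Da : Qa -> Sig -> Qa -> Prop) (Ea : Qa -> nat -> Prop)
  (Db : Qb -> Sig -> Qb -> Prop) (Eb : Qb -> nat -> Prop)
  (fa : Qa -> X) (fb : Qb -> X) (RX : X -> X -> Prop) (RQ : Qa -> Qb -> Prop) qa qb :
  bounded_morphism Da Ea DX EX fa -> bounded_morphism Db Eb DX EX fb ->
  (forall p p', RX (fa p) (fb p') <-> RQ p p') ->
  (forall a y, DX (fa qa) a y -> exists y', DX (fb qb) a y' /\ RX y y') <->
  (forall a p, Da qa a p -> exists p', Db qb a p' /\ RQ p p').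
Proof.
move=> [_ Dfa] [_ Dfb] RXQ; split=> forth a.
  move=> p ta; have /forth [_ [/Dfb [p' [tb ->]] RXp]] : DX (fa qa) a (fa p).
    by apply/Dfa; exists p.
  by exists p'; split=> //; exact/RXQ.
move=> _ /Dfa [p [ta ->]]; have [p' [tb RQp]] := forth _ _ ta.
by exists (fb p'); split; [apply/Dfb; exists p' | exact/RXQ].
Qed.

Lemma sbisim_bounded_morphism (Q1 Q2 : Type)
  (D1 : Q1 -> Sig -> Q1 -> Prop) (E1 : Q1 -> nat -> Prop)
  (D2 : Q2 -> Sig -> Q2 -> Prop) (E2 : Q2 -> nat -> Prop)
  (f1 : Q1 -> X) (f2 : Q2 -> X) n q1 q2 :
  bounded_morphism D1 E1 DX EX f1 -> bounded_morphism D2 E2 DX EX f2 ->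
  sbisim DX EX DX EX n (f1 q1) (f2 q2) <-> sbisim D1 E1 D2 E2 n q1 q2.
Proof.
move=> hom1 hom2; elim: n q1 q2 => [//|n IH] q1 q2 /=.
have [[Ef1 _] [Ef2 _]] := (hom1, hom2).
rewrite (forth_bounded_morphism _ _ hom1 hom2 IH).
rewrite (forth_bounded_morphism (RQ := fun p2 p1 => sbisim D1 E1 D2 E2 n p1 p2)
  _ _ hom2 hom1) //.
by split=> -[HE rest]; split=> // v; [rewrite -Ef1 -Ef2 | rewrite Ef1 Ef2].
Qed.

End BoundedMorphism.

Section Charts.
Variable Sig : Type.
Implicit Types C : fchart Sig.

Lemma chart_bisim_refl C : chart_bisim C C.
Proof.
exists (fun q1 q2 => q1 = q2); split=> // q _ <-; split=> //.
by split=> a q' t; exists q'.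
Qed.

Lemma chart_bisim_sym C1 C2 : chart_bisim C1 C2 -> chart_bisim C2 C1.
Proof.
move=> [B [bisimB B12]]; exists (fun q2 q1 => B q1 q2); split=> // q2 q1.
move=> /bisimB [HE [forth back]]; split; first by move=> v; split=> /HE.
by split=> a q' => [/back|/forth] [q'' [t B'']]; exists q''.
Qed.

Lemma chart_bisim_trans C1 C2 C3 :
  chart_bisim C1 C2 -> chart_bisim C2 C3 -> chart_bisim C1 C3.
Proof.
move=> [B [bisimB B12]] [B' [bisimB' B23]].
exists (fun q1 q3 => exists q2, B q1 q2 /\ B' q2 q3); split; last by exists (fs C2).
move=> q1 q3 [q2 [/bisimB [HE [f12 b12]] /bisimB' [HE' [f23 b23]]]].
split; first by move=> v; rewrite HE HE'.
split.
- move=> a q1' /f12 [q2' [t2 B12']]; have [q3' [t3 B23']] := f23 _ _ t2.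
  by exists q3'; split=> //; exists q2'.
- move=> a q3' /b23 [q2' [t2 B23']]; have [q1' [t1 B12']] := b12 _ _ t2.
  by exists q1'; split=> //; exists q2'.
Qed.

Lemma cls_eq C C' : chart_bisim C C' -> cls C = cls C'.
Proof.
move=> CC'; apply/funext => W; apply/propext; split=> WC.
  exact: chart_bisim_trans WC CC'.
exact: chart_bisim_trans WC (chart_bisim_sym CC').
Qed.

Lemma Omega_class_of (x : Omega Sig) C : proj1_sig x C -> x = class_of C.
Proof.
case: x => S pS /= SC; have [C0 SC0] := pS.
have eSC : S = cls C by rewrite SC0 in SC *; apply: cls_eq; exact: chart_bisim_sym.
rewrite /class_of; move: pS (ex_intro _ C _); rewrite eSC => pS pC.
by congr exist; exact: Prop_irrelevance.
Qed.

Lemma class_of_eq C C' : chart_bisim C C' -> class_of C = class_of C'.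
Proof. by move=> CC'; rewrite -(Omega_class_of (x := class_of C') CC'). Qed.

Lemma Oterm_class_of C v : Oterm (class_of C) v <-> fterm (fs C) v.
Proof.
split; last by move=> t; exists C; split=> //; exact: chart_bisim_refl.
by move=> [C' [[B [bisimB B'C]] t]]; have [HE _] := bisimB _ _ B'C; exact/HE.
Qed.

Lemma Otrans_class_of C a y : Otrans (class_of C) a y <->
  exists s, Defs.ftrans (fs C) a s /\ y = class_of (with_start s).
Proof.
split; last first.
  move=> [s [t ->]]; exists C; split; first exact: chart_bisim_refl.
  by exists s; split=> //; exact: chart_bisim_refl.
move=> [C' [[B [bisimB B'C]] [s' [t' y_s']]]].
have [_ [forth _]] := bisimB _ _ B'C; have [s [t Bs's]] := forth _ _ t'.
exists s; split=> //; rewrite (Omega_class_of y_s'); apply: class_of_eq.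
by exists B.
Qed.

Lemma with_start_fs C : with_start (fs C) = C.
Proof. by case: C. Qed.

Lemma class_of_bounded_morphism C :
  bounded_morphism (@Defs.ftrans Sig C) (@fterm Sig C) (@Otrans Sig) (@Oterm Sig)
    (fun q => class_of (with_start q)).
Proof.
split=> [q v|q a y]; first exact: (Oterm_class_of (with_start q)).
exact: (Otrans_class_of (with_start q)).
Qed.

Lemma sbisim_class_of n C1 C2 :
  sbisim (@Otrans Sig) (@Oterm Sig) (@Otrans Sig) (@Oterm Sig) n
    (class_of C1) (class_of C2) <-> chart_sbisim n C1 C2.
Proof.
have := sbisim_bounded_morphism n (fs C1) (fs C2)
  (class_of_bounded_morphism C1) (class_of_bounded_morphism C2).
by rewrite !with_start_fs.
Qed.

Lemma ftrans_image_finite C : image_finite (@Defs.ftrans Sig C).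
Proof.
move=> q a; exists (List.map (fun t => t.2) (fD C)) => q' t.
exact: (List.in_map (fun t => t.2) _ (q, a, q')).
Qed.

Lemma chart_bisim_sbisim C1 C2 :
  chart_bisim C1 C2 <-> forall n, chart_sbisim n C1 C2.
Proof.
split=> [[B [bisimB B12]] n|S_all]; first exact: bisim_sbisim bisimB B12.
exists (fun q1 q2 => forall n, sbisim (@Defs.ftrans Sig C1) (@fterm Sig C1)
  (@Defs.ftrans Sig C2) (@fterm Sig C2) n q1 q2).
by split=> //; apply: sbisim_all_is_bisim; exact: ftrans_image_finite.
Qed.

End Charts.

Theorem mainTheorem1 (R : realType) (Sig : Type) (C1 C2 : fchart Sig) :
  (chart_bisim C1 C2 -> bd R (class_of C1) (class_of C2) = 0) /\
  (~ chart_bisim C1 C2 ->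
     exists n : nat,
       chart_sbisim n C1 C2 /\
       (forall m : nat, chart_sbisim m C1 C2 -> (m <= n)%N) /\
       bd R (class_of C1) (class_of C2) = (2 : R) ^- n).
Proof.
rewrite /bd bd_of_sdist chart_bisim_sbisim.
split=> [S_all | not_S_all].
  by apply: sdist_eq0 => n; apply/sbisim_class_of.
have not_SO_all : ~ forall n, sbisim (@Otrans Sig) (@Oterm Sig) (@Otrans Sig) (@Oterm Sig) n
    (class_of C1) (class_of C2).
  by move=> SO_all; apply: not_S_all => n; apply/sbisim_class_of.
have [n [Sn [S_le ->]]] := sdist_max_level R not_SO_all.
exists n; split; first exact/sbisim_class_of.
by split=> // m /sbisim_class_of /S_le.
Qed.
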